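(* Let $G$ be a finite directed multigraph with vertex set $V$. The map $$H\mapsto P(G)_H:=\{\vec x\in P(G)\mid x_e=0 \text{ for all } e\notin E(H)\}$$ is an isomorphism of posets from the set of full subgraphs $H$ of $G$ with non-empty edge set (ordered by inclusion of edge sets) onto the face poset of $P(G)$ (faces ordered by inclusion). Moreover, identifying $\mathbb{R}^{E(H)}$ with its image under the coordinate inclusion $\mathbb{R}^{E(H)}\hookrightarrow\mathbb{R}^{E(G)}$, one has $P(H)=P(G)_H$, and $$\dim P(G)_H=|E(H)|-|V|+c(H)-1,$$ where $c(H)$ is the number of connected components of $H$ (isolated vertices counted as components).
   Context: For a directed multigraph $G$: a walk is a sequence of edges $(e_1,\dots,e_k)$ with $\mathrm{ar}(e_i)=\mathrm{st}(e_{i+1})$; a cycle is a walk with $\mathrm{st}(e_1)=\mathrm{ar}(e_k)$; a path is a walk with distinct edges and distinct vertices except possibly $\mathrm{st}(e_1)=\mathrm{ar}(e_k)$; a simple cycle is a non-empty cycle that is a path. For a non-empty cycle $\mathcal{C}$, $(\vec{e}_{\mathcal{C}})_e=n_e(\mathcal{C})/|\mathcal{C}|$. $P(G)=\mathrm{conv}\{\vec{e}_{\mathcal{C}}\mid\mathcal{C}\text{ simple cycle of }G\}\subset\mathbb{R}^{E(G)}$. A subgraph of $G$ here means $H=(V,E(H))$ with the same vertex set and $E(H)\subseteq E(G)$ (as multisets); $H$ is full if every edge of $H$ lies on a cycle of $H$. A face of a polytope $\mathfrak p\subset\mathbb{R}^n$ is a set of the form $\mathfrak p_f=\arg\min_{\mathfrak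 p} f$ for some linear form $f:\mathbb{R}^n\to\mathbb{R}$ (faces are thus non-empty, and $\mathfrak p$ itself is a face). The dimension of a polytope is that of its affine span. *)

From HB Require Import structures.
From mathcomp Require Import all_boot all_order all_algebra.
Set Implicit Arguments. Unset Strict Implicit. Unset Printing Implicit Defensive.
Import Order.TTheory GRing.Theory Num.Theory.
Local Open Scope ring_scope.

(* A finite directed multigraph: vertex type V (finite), edges 'I_m,
   st e = start vertex, ar e = arrival vertex.  A subgraph H (same vertex set)
   is given by its edge set H : {set 'I_m}. *)
Section Graph.
Variables (V : finType) (m : nat) (st ar : 'I_m -> V).

Definition consecutive (e f : 'I_m) : bool := ar e == st f.

Definition is_walk (s : seq 'I_m) : bool :=
  if s is e :: s' then path consecutive e s' else true.

(* cycle of H: walk in H with st(e_1) = ar(e_k) (the empty walk is a cycle) *)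
Definition is_cycle_in (H : {set 'I_m}) (s : seq 'I_m) : bool :=
  all (fun e => e \in H) s && cycle consecutive s.

Definition is_simple_cycle_in (H : {set 'I_m}) (s : seq 'I_m) : bool :=
  [&& s != [::], is_cycle_in H s, uniq s & uniq (map st s)].

Definition full (H : {set 'I_m}) : Prop :=
  forall e, e \in H -> exists s, is_cycle_in H s /\ e \in s.

Definition adjH (H : {set 'I_m}) : rel V :=
  fun u v => [exists e in H, ((st e == u) && (ar e == v)) || ((st e == v) && (ar e == u))].

(* number of connected components of H (isolated vertices count) *)
Definition ncomp (H : {set 'I_m}) : nat := n_comp (adjH H) predT.

Variable R : realFieldType.

Definition cycvec (s : seq 'I_m) : 'rV[R]_m :=
  \row_(e < m) ((count_mem e s)%:R / (size s)%:R).

Definition conv (S : 'rV[R]_m -> Prop) (x : 'rV[R]_m) : Prop :=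
  exists k (p : 'I_k -> 'rV[R]_m) (l : 'I_k -> R),
    [/\ forall i, S (p i), forall i, 0 <= l i, \sum_(i < k) l i = 1
      & x = \sum_(i < k) l i *: p i].

Definition Ppoly (H : {set 'I_m}) : 'rV[R]_m -> Prop :=
  conv (fun x => exists s, is_simple_cycle_in H s /\ x = cycvec s).

Definition Pface (H : {set 'I_m}) (x : 'rV[R]_m) : Prop :=
  Ppoly [set: 'I_m] x /\ forall e, e \notin H -> x 0 e = 0.

Definition linf (c x : 'rV[R]_m) : R := \sum_(e < m) c 0 e * x 0 e.

Definition is_face (P F : 'rV[R]_m -> Prop) : Prop :=
  (exists x, F x) /\
  exists c : 'rV[R]_m, forall x, F x <-> (P x /\ forall y, P y -> linf c x <= linf c y).

Definition affdim (S : 'rV[R]_m -> Prop) (d : nat) : Prop :=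
  exists x0, S x0 /\
  exists B : 'M[R]_(d, m),
    [/\ \rank B = d,
        forall i, exists x, S x /\ row i B = x - x0
      & forall x, S x -> (x - x0 <= B)%MS].

End Graph.
Arguments Ppoly {V m} st ar R H _.
Arguments Pface {V m} st ar R H _.

From HB Require Import structures.
From mathcomp Require Import all_boot all_order all_algebra.
From mathcomp Require Import zify lra.
Import Order.TTheory GRing.Theory Num.Theory.
Local Open Scope ring_scope.
Set Implicit Arguments. Unset Strict Implicit. Unset Printing Implicit Defensive.

(* A point of P(G) is a convex combination of normalised simple cycles, and a
   nonnegative circulation is a nonnegative combination of simple cycles of its
   support (peel off a simple cycle at its smallest value).  Given a face cut out
   by a linear form c, let H be the union of the c-optimal simple cycles.  Every
   simple cycle of H is itself optimal: summing optimal cycles that cover H and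
   subtracting it leaves a nonnegative circulation, on which the form shifted by
   the optimal value is nonnegative.  Hence the face is P(G)_H; conversely P(G)_H
   is cut out by the form counting the mass outside H.  The same covering argument
   shows that the simple cycles of H span its cycle space (circulations supported
   on H), the kernel of the incidence matrix of H, of dimension
   |E(H)| - |V| + c(H) because the potentials killed by the transposed incidence
   matrix are those constant on components.  P(G)_H spans the intersection of the
   cycle space with the hyperplane of coordinate sum 1, one dimension less. *)

Lemma ler_psum_term (R : numDomainType) (I : finType) (P : pred I) (F : I -> R) i :
  P i -> (forall j, P j -> 0 <= F j) -> F i <= \sum_(j | P j) F j.
Proof.
by move=> Pi F_ge0; rewrite (bigD1 i) //= lerDl sumr_ge0 // => j /andP[/F_ge0].
Qed.

Section LinearForms.
Variables (m : nat) (R : realFieldType) (c : 'rV[R]_m).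

Lemma linf0 : linf c 0 = 0.
Proof. by rewrite /linf big1 // => e _; rewrite mxE mulr0. Qed.

Lemma linfD x y : linf c (x + y) = linf c x + linf c y.
Proof. by rewrite /linf -big_split; apply: eq_bigr => e _; rewrite mxE mulrDr. Qed.

Lemma linfZ k x : linf c (k *: x) = k * linf c x.
Proof. by rewrite /linf mulr_sumr; apply: eq_bigr => e _; rewrite mxE mulrCA. Qed.

Lemma linfB x y : linf c (x - y) = linf c x - linf c y.
Proof. by rewrite -scaleN1r linfD linfZ mulN1r. Qed.

Lemma linf_shift a x : linf (c - const_mx a) x = linf c x - a * \sum_e x 0 e.
Proof.
rewrite /linf mulr_sumr -sumrB; apply: eq_bigr => e _.
by rewrite !mxE mulrBl.
Qed.

Lemma linf_sum (I : Type) (r : seq I) (P : pred I) (F : I -> 'rV[R]_m) :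
  linf c (\sum_(i <- r | P i) F i) = \sum_(i <- r | P i) linf c (F i).
Proof. exact: (big_morph _ linfD linf0). Qed.

End LinearForms.

Lemma fin_all_exists_in (T : finType) (U : Type) (A : {pred T}) (P : T -> U -> Prop) :
  U -> (forall x, x \in A -> exists u, P x u) ->
  exists f : T -> U, forall x, x \in A -> P x (f x).
Proof.
move=> u0 exP; suff /fin_all_exists[f fP] : forall x, exists u, x \in A -> P x u.
  by exists f.
by move=> x; case: (boolP (x \in A)) => [/exP[u]|_]; [exists u | exists u0].
Qed.

Section SimpleCycles.
Variables (V : finType) (m : nat) (st ar : 'I_m -> V).

Local Notation simple := (is_simple_cycle_in st ar).
Local Notation consecutive := (consecutive st ar).

Lemma simple_cycle_subset (A B : {set 'I_m}) s :
  A \subset B -> simple A s -> simple B s.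
Proof.
move=> AB /and4P[s0 /andP[sA cs] us ust]; apply/and4P; split=> //.
by rewrite /is_cycle_in cs andbT; apply/allP => e /(allP sA)/(subsetP AB).
Qed.

Lemma simple_cycle_setT H s : simple H s -> simple setT s.
Proof. exact/simple_cycle_subset/subsetT. Qed.

Lemma simple_cycle_size H s : simple H s -> (size s <= #|V|)%N.
Proof.
by case/and4P=> _ _ _ ust; rewrite -(size_map st) -(card_uniqP ust) max_card.
Qed.

(* Follow successors from an edge of [S] until the start vertex of an edge of
   the current simple path repeats; the loop closed there is a simple cycle. *)
Lemma exists_simple_cycle (S : {set 'I_m}) : S != set0 ->
  (forall f, f \in S -> exists2 g, g \in S & st g = ar f) ->
  exists s, simple S s.
Proof.
move=> /set0Pn[x0 x0S] succ.
suff grow n : (exists s, simple S s) \/ exists x q,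
    [/\ x \in S, all (mem S) q, path consecutive x q,
        uniq (map st (x :: q)) & size q = n].
  case: (grow #|V|) => // [[x [q [_ _ _ ust szq]]]].
  have := max_card (mem (map st (x :: q))).
  by rewrite (card_uniqP ust) size_map /= szq ltnn.
elim: n => [|n [|[x [q [xS qS xq ust szq]]]]]; [by right; exists x0, [::] | by left|].
have lastS : last x q \in S.
  by have := mem_last x q; rewrite inE => /orP[/eqP->|/(allP qS)].
have [g gS gE] := succ _ lastS.
case: (boolP (ar (last x q) \in map st (x :: q))) => [/mapP[h hxq hE]|fresh].
  left; have [p1 [p2 xqE]] : exists p1 p2, x :: q = p1 ++ h :: p2.
    by case/splitPr: hxq => p1 p2; exists p1, p2.
  have lastE : last h p2 = last x q by rewrite -[RHS]/(last x0 (x :: q)) xqE last_cat.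
  have [p2S hp2] : all (mem S) (h :: p2) /\ path consecutive h p2.
    have : all (mem S) (x :: q) && is_walk st ar (x :: q) by rewrite /= xS qS.
    rewrite xqE all_cat; case: (p1) => [|y p1'] /=; first by case/andP=> /andP[-> ->].
    by rewrite cat_path => /andP[/andP[_ ->]] /andP[_ /= /andP[_ ->]].
  have ust2 : uniq (map st (h :: p2)).
    by move: ust; rewrite xqE map_cat cat_uniq => /and3P[].
  exists (h :: p2); apply/and4P; split=> //; last exact: map_uniq ust2.
  by rewrite /is_cycle_in p2S /= rcons_path hp2 /consecutive lastE hE eqxx.
right; exists x, (rcons q g); split=> //.
- by rewrite all_rcons qS andbT.
- by rewrite rcons_path xq /consecutive gE eqxx.
- by rewrite -rcons_cons map_rcons rcons_uniq gE fresh.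
- by rewrite size_rcons szq.
Qed.

Lemma path_map_belast x q :
  path consecutive x q -> map ar (belast x q) = map st q.
Proof. by elim: q x => //= y q IH x /andP[/eqP-> /IH->]. Qed.

Lemma perm_cycle_ar_st s : cycle consecutive s -> perm_eq (map ar s) (map st s).
Proof.
case: s => // x q; rewrite /= rcons_path => /andP[xq /eqP lastE].
have -> : ar x :: map ar q = rcons (map st q) (st x).
  by rewrite -[_ :: _]/(map ar (x :: q)) lastI map_rcons path_map_belast // lastE.
by rewrite -cats1 perm_catC.
Qed.

Fixpoint seqs_upto (n : nat) : seq (seq 'I_m) :=
  if n is n'.+1 then [::] :: [seq e :: s | e <- enum 'I_m, s <- seqs_upto n']
  else [:: [::]].

Lemma mem_seqs_upto n s : (size s <= n)%N -> s \in seqs_upto n.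
Proof.
elim: n s => [|n IH] [|e s] //= szs; rewrite inE ?eqxx //.
by rewrite (allpairs_f (fun e s => e :: s)) ?orbT ?mem_enum ?IH.
Qed.

Definition simple_cycles (H : {set 'I_m}) : seq (seq 'I_m) :=
  [seq s <- seqs_upto #|V| | simple H s].

Lemma mem_simple_cycles H s : (s \in simple_cycles H) = simple H s.
Proof.
rewrite mem_filter andb_idr // => /simple_cycle_size.
exact: mem_seqs_upto.
Qed.

End SimpleCycles.

Section Circulations.
Variables (V : finType) (m : nat) (st ar : 'I_m -> V) (R : realFieldType).

Local Notation simple := (is_simple_cycle_in st ar).
Local Notation consecutive := (consecutive st ar).

Definition edge_count (s : seq 'I_m) : 'rV[R]_m := \row_e (count_mem e s)%:R.

Definition circulation (y : 'rV[R]_m) : Prop :=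
  forall v, \sum_(e | ar e == v) y 0 e = \sum_(e | st e == v) y 0 e.

Lemma edge_countE s e : edge_count s 0 e = (count_mem e s)%:R.
Proof. by rewrite mxE. Qed.

Lemma edge_count_ge0 s e : 0 <= edge_count s 0 e.
Proof. by rewrite edge_countE ler0n. Qed.

Lemma edge_count_uniq s e : uniq s -> edge_count s 0 e = (e \in s)%:R.
Proof. by move=> us; rewrite edge_countE count_uniq_mem. Qed.

Lemma edge_count_eq0 s e : (edge_count s 0 e == 0) = (e \notin s).
Proof. by rewrite edge_countE pnatr_eq0 -has_pred1 has_count lt0n negbK. Qed.

Lemma sum_count_mem (P : pred 'I_m) s :
  \sum_(e | P e) (count_mem e s)%:R = (count P s)%:R :> R.
Proof.
elim: s => [|x s IH] /=; first by rewrite big1.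
under eq_bigr => e _ do rewrite natrD.
rewrite big_split /= IH natrD; congr (_ + _).
case Px: (P x); last by rewrite big1 // => e Pe; case: eqP => // xe; rewrite xe Pe in Px.
by rewrite (bigD1 x) //= eqxx big1 ?addr0 // => e /andP[_ /negPf]; rewrite eq_sym => ->.
Qed.

Lemma sum_edge_count s : \sum_e edge_count s 0 e = (size s)%:R.
Proof.
by under eq_bigr => e _ do rewrite edge_countE; rewrite (sum_count_mem predT) count_predT.
Qed.

Lemma circulation0 : circulation 0.
Proof. by move=> v; rewrite !big1 // => e _; rewrite mxE. Qed.

Lemma circulationD a b : circulation a -> circulation b -> circulation (a + b).
Proof.
move=> ca cb v; under eq_bigr => e _ do rewrite mxE.
by under [RHS]eq_bigr => e _ do rewrite mxE; rewrite !big_split /= ca cb.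
Qed.

Lemma circulationZ k a : circulation a -> circulation (k *: a).
Proof.
move=> ca v; under eq_bigr => e _ do rewrite mxE.
by under [RHS]eq_bigr => e _ do rewrite mxE; rewrite -!mulr_sumr ca.
Qed.

Lemma circulation_edge_count s : cycle consecutive s -> circulation (edge_count s).
Proof.
move=> cs v; under eq_bigr => e _ do rewrite edge_countE.
under [RHS]eq_bigr => e _ do rewrite edge_countE.
rewrite !sum_count_mem -(count_map ar (pred1 v)) -(count_map st (pred1 v)).
by rewrite (permP (perm_cycle_ar_st cs)).
Qed.

Definition support (y : 'rV[R]_m) : {set 'I_m} := [set e | 0 < y 0 e].

Lemma support_eq0 (y : 'rV[R]_m) : (forall e, 0 <= y 0 e) -> support y = set0 -> y = 0.
Proof.
move=> y_ge0 /setP supp0; apply/rowP => e; rewrite mxE.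
by have := supp0 e; rewrite !inE => /negbT; rewrite -leNgt => ye; apply/le_anti/andP.
Qed.

Section NonnegativeCirculation.
Variable y : 'rV[R]_m.
Hypotheses (y_ge0 : forall e, 0 <= y 0 e) (y_circ : circulation y).

Lemma support_succ f : f \in support y -> exists2 g, g \in support y & st g = ar f.
Proof.
rewrite inE => yf.
have : \sum_(e | st e == ar f) y 0 e <> 0.
  rewrite -y_circ => /psumr_eq0P /(_ f) f0.
  by move: yf; rewrite f0 ?ltxx // => e _; apply: y_ge0.
by case/psumr_neq0P => [e _|g /andP[/eqP gE yg]]; [apply: y_ge0 | exists g; rewrite ?inE].
Qed.

(* Subtracting the smallest value of [y] along a simple cycle of its support
   kills at least one edge of the support. *)
Lemma circulation_peel : support y != set0 ->
  exists s (l : R), [/\ simple (support y) s, 0 < l,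
    forall e, 0 <= (y - l *: edge_count s) 0 e
    & support (y - l *: edge_count s) \proper support y].
Proof.
move=> supp0; have [s ss] := exists_simple_cycle supp0 support_succ.
have /and4P[s0 /andP[sS _] us _] := ss.
have [f0 f0s] : exists f0, f0 \in s by case: (s) s0 => // f0 ? _; exists f0; rewrite mem_head.
case: (arg_minP (fun e => y 0 e) f0s) => f fs fmin.
have {}fs : f \in s := fs.
have yf : 0 < y 0 f by have := allP sS f fs; rewrite inE.
have y'E e : (y - y 0 f *: edge_count s) 0 e = y 0 e - y 0 f * (e \in s)%:R.
  by rewrite !mxE -edge_countE edge_count_uniq.
exists s, (y 0 f); split=> //.
  move=> e; rewrite y'E; case: (boolP (e \in s)) => es; last by rewrite mulr0 subr0.
  by rewrite mulr1 subr_ge0 fmin.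
apply/properP; split; last first.
  by exists f; [exact: (allP sS) | rewrite /support inE y'E fs mulr1 subrr ltxx].
apply/subsetP => e; rewrite !inE y'E => /lt_le_trans; apply.
by rewrite lerBlDr lerDl mulr_ge0 ?ler0n ?ltW.
Qed.

End NonnegativeCirculation.

Lemma circulation_decomposition (y : 'rV[R]_m) : (forall e, 0 <= y 0 e) -> circulation y ->
  exists L : seq (R * seq 'I_m), y = \sum_(p <- L) p.1 *: edge_count p.2 /\
    forall p, p \in L -> 0 <= p.1 /\ simple (support y) p.2.
Proof.
have [n] := ubnP #|support y|; elim: n y => // n IH y supp_n y_ge0 y_circ.
case: (eqVneq (support y) set0) => [supp0|supp0].
  by exists [::]; rewrite big_nil (support_eq0 y_ge0 supp0).
have [s [l [ss l_gt0 y'_ge0 supp']]] := circulation_peel y_ge0 y_circ supp0.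
have y'_circ : circulation (y - l *: edge_count s).
  rewrite -scaleNr; apply: circulationD => //; apply/circulationZ/circulation_edge_count.
  by case/and4P: ss => _ /andP[].
have [|L [y'E Ls]] := IH _ _ y'_ge0 y'_circ.
  exact: leq_trans (proper_card supp') _.
exists ((l, s) :: L); split; first by rewrite big_cons -y'E addrC subrK.
move=> p; rewrite inE => /predU1P[-> | pL]; first by rewrite ltW.
have [p1_ge0 sp] := Ls p pL; split=> //.
exact: simple_cycle_subset (proper_sub supp') sp.
Qed.

End Circulations.

(* The statement does not involve a field; the decomposition is done over [rat]. *)
Lemma full_simple_cycle (V : finType) (m : nat) (st ar : 'I_m -> V) H :
  full st ar H ->
  forall e, e \in H -> exists2 s, is_simple_cycle_in st ar H s & e \in s.
Proof.
move=> fullH e eH; have [w [/andP[wH cw] ew]] := fullH e eH.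
have [L [wE Lsimple]] :=
  circulation_decomposition (edge_count_ge0 rat w) (circulation_edge_count rat cw).
have suppH : support (edge_count rat w) \subset H.
  apply/subsetP => f; rewrite inE lt0r edge_count_eq0 negbK => /andP[fw _].
  exact: (allP wH).
have /hasP[p pL ep] : has (fun p : rat * seq 'I_m => e \in p.2) L.
  apply: contraTT ew => /hasPn eL; rewrite -(edge_count_eq0 rat) wE summxE.
  rewrite big_seq big1 // => p pL.
  by rewrite mxE; apply/eqP; rewrite mulf_eq0 edge_count_eq0 eL ?orbT.
by exists p.2 => //; apply: simple_cycle_subset suppH (Lsimple p pL).2.
Qed.

Section CycleCover.
Variables (V : finType) (m : nat) (st ar : 'I_m -> V) (R : realFieldType).

Local Notation simple := (is_simple_cycle_in st ar).
Local Notation consecutive := (consecutive st ar).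
Local Notation circulation := (circulation st ar).
Local Notation edge_count := (@edge_count m R).

Section CoveringCycles.
Variables (H : {set 'I_m}) (T : 'I_m -> seq 'I_m).

Definition cover_count : 'rV[R]_m := \sum_(e in H) edge_count (T e).

Lemma cover_countE f : cover_count 0 f = \sum_(e in H) (count_mem f (T e))%:R.
Proof. by rewrite summxE; apply: eq_bigr => e _; rewrite edge_countE. Qed.

Lemma cover_count_ge0 f : 0 <= cover_count 0 f.
Proof. by rewrite cover_countE sumr_ge0. Qed.

Lemma cover_count_circulation :
  (forall e, e \in H -> cycle consecutive (T e)) -> circulation cover_count.
Proof.
move=> cT; rewrite /cover_count.
apply: (big_ind (fun y : 'rV[R]_m => circulation y)) => [|a b|e eH].
- exact: circulation0.
- exact: circulationD.
- exact/circulation_edge_count/cT.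
Qed.

Lemma cover_count_ge1 :
  (forall e, e \in H -> e \in T e) -> forall f, f \in H -> 1 <= cover_count 0 f.
Proof.
move=> Te f fH; rewrite cover_countE.
apply: le_trans (ler_psum_term (F := fun e => (count_mem f (T e))%:R) fH _) => //.
by rewrite ler1n -has_count has_pred1 Te.
Qed.

Lemma cover_count_out : (forall e, e \in H -> all (mem H) (T e)) ->
  forall f, f \notin H -> cover_count 0 f = 0.
Proof.
move=> TH f fH; rewrite cover_countE big1 // => e eH; apply/eqP.
by rewrite pnatr_eq0 eqn0Ngt -has_count has_pred1; apply: contra fH; apply/(allP (TH e eH)).
Qed.

End CoveringCycles.

(* The covering cycles summed, minus [s], form a nonnegative circulation, hence a
   nonnegative combination of simple cycles. *)
Lemma linf_simple_cycle_eq0 (c : 'rV[R]_m) (H : {set 'I_m}) (T : 'I_m -> seq 'I_m) :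
  (forall t, simple setT t -> 0 <= linf c (edge_count t)) ->
  (forall e, e \in H -> [/\ simple setT (T e), e \in T e & linf c (edge_count (T e)) = 0]) ->
  forall s, simple H s -> linf c (edge_count s) = 0.
Proof.
move=> c_ge0 Tcover s ss; apply/le_anti; rewrite c_ge0 ?(simple_cycle_setT ss) // andbT.
have /and4P[_ /andP[sH cs] us _] := ss.
pose z := cover_count H T - edge_count s.
have z_ge0 f : 0 <= z 0 f.
  rewrite !mxE -edge_countE edge_count_uniq // subr_ge0.
  case: (boolP (f \in s)) => [fs | _]; last exact: cover_count_ge0.
  by apply: cover_count_ge1 (allP sH f fs) => e /Tcover[].
have z_circ : circulation z.
  rewrite /z -scaleN1r; apply: circulationD; last exact/circulationZ/circulation_edge_count.
  by apply: cover_count_circulation => e /Tcover[/and4P[_ /andP[]]].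
have [L [zE Ls]] := circulation_decomposition z_ge0 z_circ.
have : 0 <= linf c z.
  rewrite zE linf_sum big_seq sumr_ge0 // => p /Ls[p1_ge0 sp].
  by rewrite linfZ mulr_ge0 ?c_ge0 ?(simple_cycle_setT sp).
by rewrite linfB /cover_count linf_sum big1 ?sub0r ?oppr_ge0 // => e /Tcover[_ _ ->].
Qed.

Lemma circulation_sub_cycle_span (H : {set 'I_m}) k (C : 'M[R]_(k, m)) : full st ar H ->
  (forall s, simple H s -> (edge_count s <= C)%MS) ->
  forall y, circulation y -> (forall e, e \notin H -> y 0 e = 0) -> (y <= C)%MS.
Proof.
move=> fullH sC y y_circ y_out.
have [T TH] : exists T : 'I_m -> seq 'I_m, forall e, e \in H -> simple H (T e) /\ e \in T e.
  apply: (@fin_all_exists_in _ _ H (fun e t => simple H t /\ e \in t) [::]).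
  by move=> e /(full_simple_cycle fullH)[t ? ?]; exists t.
pose g := cover_count H T; pose t := \sum_e `|y 0 e|.
have gC : (g <= C)%MS by apply: summx_sub => e /TH[/sC].
have g_circ : circulation g.
  by apply: cover_count_circulation => e /TH[/and4P[_ /andP[]]].
have g_ge1 : forall f, f \in H -> 1 <= g 0 f by apply: cover_count_ge1 => e /TH[].
have g_out : forall f, f \notin H -> g 0 f = 0.
  by apply: cover_count_out => e /TH[/and4P[_ /andP[]]].
pose z := y + t *: g.
have zE f : z 0 f = y 0 f + t * g 0 f by rewrite !mxE.
have z_ge0 f : 0 <= z 0 f.
  rewrite zE; case: (boolP (f \in H)) => fH; last by rewrite y_out // g_out // mulr0 addr0.
  have yt : `|y 0 f| <= t by apply: (ler_psum_term (P := predT)) => // *.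
  have tg : t <= t * g 0 f by rewrite ler_peMr ?g_ge1 ?sumr_ge0.
  have := ler_norm (- y 0 f); rewrite normrN; lra.
have z_circ : circulation z := circulationD y_circ (circulationZ t g_circ).
have [L [zE' Ls]] := circulation_decomposition z_ge0 z_circ.
have zC : (z <= C)%MS.
  rewrite zE' big_seq summx_sub // => p /Ls[_ sp]; apply/scalemx_sub/sC.
  apply: simple_cycle_subset sp; apply/subsetP => f; rewrite inE; apply: contraTT => fH.
  by rewrite zE y_out // g_out // mulr0 addr0 ltxx.
by rewrite -[y](addrK (t *: g)) addmx_sub ?scalemx_sub // -scaleNr scalemx_sub.
Qed.

End CycleCover.

Lemma sum_eq1_nonzero (R : numDomainType) k (l : 'I_k -> R) :
  \sum_i l i = 1 -> exists i, l i != 0.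
Proof.
move=> l1; apply/existsP; apply: contraT; rewrite negb_exists => /forallP l0.
by move: l1; rewrite big1 => [/eqP|i _]; [rewrite eq_sym oner_eq0 | apply/eqP/negbNE].
Qed.

Section CyclePolytope.
Variables (V : finType) (m : nat) (st ar : 'I_m -> V) (R : realFieldType).

Local Notation simple := (is_simple_cycle_in st ar).
Local Notation cycvec := (@cycvec m R).
Local Notation edge_count := (@edge_count m R).
Local Notation P := (Ppoly st ar R).
Local Notation Pface := (Pface st ar R).

Lemma cycvecE s : cycvec s = (size s)%:R^-1 *: edge_count s.
Proof. by apply/rowP => e; rewrite !mxE mulrC. Qed.

Lemma edge_count_cycvec s : s != [::] -> edge_count s = (size s)%:R *: cycvec s.
Proof. by case: s => // e s _; rewrite cycvecE scalerA divff ?scale1r ?pnatr_eq0. Qed.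

Lemma cycvec_ge0 s f : 0 <= cycvec s 0 f.
Proof. by rewrite mxE divr_ge0 ?ler0n. Qed.

Lemma cycvec_eq0 s f : f \notin s -> cycvec s 0 f = 0.
Proof. by move=> fs; rewrite mxE (count_memPn fs) mul0r. Qed.

Lemma cycvec_gt0 s f : f \in s -> 0 < cycvec s 0 f.
Proof.
move=> fs; rewrite mxE divr_gt0 // ltr0n -?has_count ?has_pred1 //.
by case: s fs.
Qed.

Lemma sum_cycvec s : s != [::] -> \sum_e cycvec s 0 e = 1.
Proof.
move=> s0; under eq_bigr => e _ do rewrite cycvecE mxE.
by rewrite -mulr_sumr sum_edge_count mulVf // pnatr_eq0; case: s s0.
Qed.

Lemma circulation_cycvec s : cycle (consecutive st ar) s -> circulation st ar (cycvec s).
Proof. by move=> cs; rewrite cycvecE; apply/circulationZ/circulation_edge_count. Qed.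

Lemma PpolyP H x : P H x <-> exists k (s : 'I_k -> seq 'I_m) (l : 'I_k -> R),
  [/\ forall i, simple H (s i), forall i, 0 <= l i, \sum_i l i = 1
    & x = \sum_i l i *: cycvec (s i)].
Proof.
split=> [[k [p [l [ps l_ge0 l1 xE]]]] | [k [s [l [ss l_ge0 l1 xE]]]]].
  have /fin_all_exists[s sE] : forall i, exists s, simple H s /\ p i = cycvec s.
    by move=> i; have [s ?] := ps i; exists s.
  exists k, s, l; split=> // [i | ]; first by case: (sE i).
  by rewrite xE; apply: eq_bigr => i _; case: (sE i) => _ ->.
by exists k, (fun i => cycvec (s i)), l; split=> // i; exists (s i).
Qed.

Lemma Ppoly_cycvec H s : simple H s -> P H (cycvec s).
Proof.
move=> ss; apply/PpolyP; exists 1, (fun=> s), (fun=> 1).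
by split=> //; rewrite big_ord1 ?scale1r.
Qed.

Lemma Ppoly_subset (H1 H2 : {set 'I_m}) (x : 'rV[R]_m) : H1 \subset H2 -> P H1 x -> P H2 x.
Proof.
move=> H12 /PpolyP[k [s [l [ss l_ge0 l1 xE]]]]; apply/PpolyP; exists k, s, l.
split=> // i; exact: simple_cycle_subset H12 (ss i).
Qed.

Section CycleCombination.
Variables (k : nat) (s : 'I_k -> seq 'I_m) (l : 'I_k -> R) (x : 'rV[R]_m).
Hypotheses (l_ge0 : forall i, 0 <= l i) (xE : x = \sum_i l i *: cycvec (s i)).

Lemma cycle_combinationE f : x 0 f = \sum_i l i * cycvec (s i) 0 f.
Proof. by rewrite xE summxE; apply: eq_bigr => i _; rewrite mxE. Qed.

Lemma cycle_combination_ge0 f : 0 <= x 0 f.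
Proof. by rewrite cycle_combinationE sumr_ge0 // => i _; rewrite mulr_ge0 ?cycvec_ge0. Qed.

Lemma cycle_combination_gt0 i f : l i != 0 -> f \in s i -> 0 < x 0 f.
Proof.
move=> li fs; rewrite cycle_combinationE.
have term : 0 < l i * cycvec (s i) 0 f.
  by rewrite mulr_gt0 ?cycvec_gt0 // lt_neqAle eq_sym li l_ge0.
apply: lt_le_trans term (ler_psum_term (P := predT) _ _) => // j _.
by rewrite mulr_ge0 ?cycvec_ge0.
Qed.

End CycleCombination.

Lemma Ppoly_ge0 H x f : P H x -> 0 <= x 0 f.
Proof. by case/PpolyP=> k [s [l [_ l_ge0 _ xE]]]; exact: cycle_combination_ge0 l_ge0 xE f. Qed.

Lemma Ppoly_Pface H x : P H x <-> Pface H x.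
Proof.
split=> [Px | [/PpolyP[k [s [l [ss l_ge0 l1 xE]]]] x_out]].
  split; first exact: Ppoly_subset (subsetT H) Px.
  move=> e eH; case/PpolyP: Px => k [s [l [ss _ _ xE]]].
  rewrite (cycle_combinationE xE) big1 // => i _; rewrite cycvec_eq0 ?mulr0 //.
  by apply: contra eH; have /and4P[_ /andP[/allP sH _] _ _] := ss i; apply: sH.
have [i0 li0] := sum_eq1_nonzero l1.
have sH i : l i != 0 -> simple H (s i).
  move=> li; have /and4P[s0 /andP[_ cs] us ust] := ss i.
  apply/and4P; split=> //; rewrite /is_cycle_in cs andbT; apply/allP => f fs.
  apply: contraT => fH; have := cycle_combination_gt0 l_ge0 xE li fs.
  by rewrite x_out // ltxx.
(* cycles of weight zero are replaced by one of positive weight *)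
apply/PpolyP; exists k, (fun i => if l i == 0 then s i0 else s i), l.
split=> // [i | ]; first by case: eqP => [_ | /eqP]; apply: sH.
by rewrite xE; apply: eq_bigr => i _; case: eqP => // ->; rewrite !scale0r.
Qed.

Lemma Pface_face H : full st ar H -> H != set0 -> is_face (P setT) (Pface H).
Proof.
move=> fullH /set0Pn[e0 /(full_simple_cycle fullH)[s0 s0H _]].
pose c : 'rV[R]_m := \row_e (e \notin H)%:R.
have cE y : linf c y = \sum_e (e \notin H)%:R * y 0 e.
  by apply: eq_bigr => e _; rewrite mxE.
have c_ge0 y : P setT y -> 0 <= linf c y.
  by move=> Py; rewrite cE sumr_ge0 // => e _; rewrite mulr_ge0 ?ler0n ?(Ppoly_ge0 _ Py).
have c_face y : Pface H y -> linf c y = 0.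
  case=> _ y_out; rewrite cE big1 // => e _.
  by case: (boolP (e \in H)) => eH; rewrite ?mul0r ?y_out ?mulr0.
have s0face : Pface H (cycvec s0) by apply/Ppoly_Pface/Ppoly_cycvec.
split; first by exists (cycvec s0).
exists c => x; split=> [xF | [Px xmin]].
  by split=> [|y Py]; [case: xF | rewrite c_face ?c_ge0].
split=> // e eH; have : linf c x == 0.
  by rewrite eq_le c_ge0 // andbT -(c_face _ s0face) xmin //; case: s0face.
rewrite cE psumr_eq0 => [/allP/(_ e (mem_index_enum _)) | f _].
  by rewrite eH mul1r => /eqP.
by rewrite mulr_ge0 ?ler0n ?(Ppoly_ge0 _ Px).
Qed.

Lemma Pface_subset (H1 H2 : {set 'I_m}) : full st ar H1 ->
  H1 \subset H2 <-> (forall x, Pface H1 x -> Pface H2 x).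
Proof.
move=> fullH1; split=> [H12 x [Px x_out] | sub].
  by split=> // e eH2; apply: x_out; apply: contra eH2; apply: (subsetP H12).
apply/subsetP => e /(full_simple_cycle fullH1)[s sH1 es].
have [_ s_out] := sub _ ((Ppoly_Pface H1 _).1 (Ppoly_cycvec sH1)).
by apply: contraT => /s_out /eqP; rewrite gt_eqF ?cycvec_gt0.
Qed.

Section FaceSupport.
Variables (F : 'rV[R]_m -> Prop) (c x1 : 'rV[R]_m).
Hypotheses (Fx1 : F x1)
  (Fc : forall x, F x <-> P setT x /\ forall y, P setT y -> linf c x <= linf c y).

Local Notation mu := (linf c x1).

Definition optimal s := linf c (cycvec s) == mu.

Definition face_support : {set 'I_m} :=
  [set e | has (fun s => optimal s && (e \in s)) (simple_cycles st ar setT)].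

Lemma face_min y : P setT y -> mu <= linf c y.
Proof. by have [_ x1min] := (Fc x1).1 Fx1; apply: x1min. Qed.

Lemma face_linf y : F y -> linf c y = mu.
Proof.
have [Px1 _] := (Fc x1).1 Fx1.
by case/Fc=> Py ymin; apply/le_anti; rewrite ymin // face_min.
Qed.

Lemma face_weight_optimal k (s : 'I_k -> seq 'I_m) (l : 'I_k -> R) y :
  F y -> (forall i, simple setT (s i)) -> (forall i, 0 <= l i) -> \sum_i l i = 1 ->
  y = \sum_i l i *: cycvec (s i) -> forall i, l i != 0 -> optimal (s i).
Proof.
move=> Fy ss l_ge0 l1 yE.
have gap_ge0 i : 0 <= l i * (linf c (cycvec (s i)) - mu).
  by rewrite mulr_ge0 ?l_ge0 // subr_ge0; apply/face_min/Ppoly_cycvec/ss.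
have : \sum_i l i * (linf c (cycvec (s i)) - mu) == 0.
  under eq_bigr => i _ do rewrite mulrBr.
  rewrite sumrB -mulr_suml l1 mul1r -(face_linf Fy) yE linf_sum subr_eq0.
  by apply/eqP/eq_bigr => i _; rewrite linfZ.
rewrite psumr_eq0 // => /allP al i li; have := al i (mem_index_enum _).
by rewrite mulf_eq0 (negPf li) subr_eq0.
Qed.

Lemma mem_face_support e :
  reflect (exists2 s, simple setT s & optimal s && (e \in s)) (e \in face_support).
Proof.
rewrite inE; apply: (iffP hasP) => [[s] | [s]]; rewrite ?mem_simple_cycles => ss sopt.
  by exists s.
by exists s; rewrite ?mem_simple_cycles.
Qed.

Lemma optimal_simple_face_support s :
  simple setT s -> optimal s -> simple face_support s.
Proof.
move=> ss sopt; have /and4P[s0 /andP[_ cs] us ust] := ss.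
apply/and4P; split=> //; rewrite /is_cycle_in cs andbT; apply/allP => e es.
by apply/mem_face_support; exists s; rewrite ?sopt.
Qed.

(* Shifting [c] by [mu] gives a form that is nonnegative on simple cycles and
   vanishes exactly on the optimal ones. *)
Lemma simple_face_support_optimal s : simple face_support s -> optimal s.
Proof.
move=> ss; pose c' := c - const_mx mu.
have c'E t : t != [::] -> linf c' (edge_count t) = (size t)%:R * (linf c (cycvec t) - mu).
  move=> t0; rewrite linf_shift sum_edge_count edge_count_cycvec // linfZ.
  by rewrite mulrBr [mu * _]mulrC.
have c'_ge0 t : simple setT t -> 0 <= linf c' (edge_count t).
  move=> tt; have /and4P[t0 _ _ _] := tt.
  by rewrite c'E // mulr_ge0 ?ler0n // subr_ge0; apply/face_min/Ppoly_cycvec.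
have [T TH] : exists T : 'I_m -> seq 'I_m, forall e, e \in face_support ->
    [/\ simple setT (T e), e \in T e & linf c' (edge_count (T e)) = 0].
  apply: (@fin_all_exists_in _ _ _
    (fun e t => [/\ simple setT t, e \in t & linf c' (edge_count t) = 0]) [::]).
  move=> e /mem_face_support[t tt /andP[/eqP topt et]]; exists t; split=> //.
  by have /and4P[t0 _ _ _] := tt; rewrite c'E // topt subrr mulr0.
have /and4P[s0 _ _ _] := ss.
have := linf_simple_cycle_eq0 c'_ge0 TH ss; rewrite c'E // => /eqP.
by rewrite mulf_eq0 pnatr_eq0 size_eq0 (negPf s0) subr_eq0.
Qed.

Lemma face_supportP x : F x <-> Pface face_support x.
Proof.
split=> [Fx | /Ppoly_Pface Px].
  have [Px _] := (Fc x).1 Fx; split=> // e.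
  apply: contraNeq => /eqP xe; have [k [s [l [ss l_ge0 l1 xE]]]] := (PpolyP _ _).1 Px.
  move: xe; rewrite (cycle_combinationE xE) => /psumr_neq0P[i _ | i /andP[_ term_gt0]].
    by rewrite mulr_ge0 ?cycvec_ge0.
  have li : l i != 0 by apply: contraTneq term_gt0 => ->; rewrite mul0r ltxx.
  have es : e \in s i by apply: contraTT term_gt0 => /cycvec_eq0->; rewrite mulr0 ltxx.
  apply/mem_face_support; exists (s i) => //.
  by rewrite (face_weight_optimal Fx ss l_ge0 l1 xE).
apply/Fc; split; first exact: Ppoly_subset (subsetT _) Px.
suff -> : linf c x = mu by move=> y; apply: face_min.
have [k [s [l [ss _ l1 ->]]]] := (PpolyP _ _).1 Px.
rewrite linf_sum (eq_bigr (fun i => l i * mu)) => [|i _].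
  by rewrite -mulr_suml l1 mul1r.
by rewrite linfZ (eqP (simple_face_support_optimal (ss i))).
Qed.

Lemma full_face_support : full st ar face_support.
Proof.
move=> e /mem_face_support[s ss /andP[sopt es]]; exists s; split=> //.
by have /and4P[_ ? _ _] := optimal_simple_face_support ss sopt.
Qed.

Lemma face_support_neq0 : face_support != set0.
Proof.
have [Px1 _] := (Fc x1).1 Fx1.
have [k [s [l [ss l_ge0 l1 xE]]]] := (PpolyP _ _).1 Px1.
have [i li] := sum_eq1_nonzero l1.
have sopt := face_weight_optimal Fx1 ss l_ge0 l1 xE li.
have /and4P[s0 _ _ _] := ss i.
case E: (s i) s0 => [//|e t] _; apply/set0Pn; exists e.
by apply/mem_face_support; exists (s i); rewrite ?sopt // E mem_head.
Qed.

End FaceSupport.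

Lemma face_Pface F : is_face (P setT) F ->
  exists H, [/\ full st ar H, H != set0 & forall x, F x <-> Pface H x].
Proof.
case=> [[x1 Fx1] [c Fc]]; exists (face_support c x1).
by split; [exact: full_face_support | apply: face_support_neq0 Fc | apply: face_supportP].
Qed.

End CyclePolytope.

Section ConvexHull.
Variables (m : nat) (R : realFieldType).

Lemma eq_conv (S T : 'rV[R]_m -> Prop) :
  (forall x, S x <-> T x) -> forall x, conv S x -> conv T x.
Proof.
move=> ST x [k [p [l [Sp l_ge0 l1 xE]]]].
by exists k, p, l; split=> // i; apply/ST.
Qed.

Lemma eq_affdim (S T : 'rV[R]_m -> Prop) d :
  (forall x, S x <-> T x) -> affdim S d -> affdim T d.
Proof.
move=> ST [x0 [/ST Tx0 [B [rankB rowB spanB]]]]; exists x0; split=> //.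
exists B; split=> // [i | x /ST]; last exact: spanB.
by have [x [/ST Tx ->]] := rowB i; exists x.
Qed.

End ConvexHull.

Section AffineHull.
Variables (m k : nat) (R : realFieldType) (C : 'M[R]_(k, m)) (i0 : 'I_k).

Local Notation rows := (fun x => exists i, x = row i C).
Local Notation D := (C - (const_mx 1 : 'cV[R]_k) *m row i0 C).

Lemma row_sub_const_row i : row i D = row i C - row i0 C.
Proof. by apply/rowP => e; rewrite !mxE big_ord1 !mxE mul1r. Qed.

Lemma affdim_conv_rows : affdim (conv rows) (\rank D).
Proof.
have row_conv i : conv rows (row i C).
  exists 1, (fun=> row i C), (fun=> 1); split=> //; first by move=> _; exists i.
    by rewrite big_ord1.
  by rewrite big_ord1 scale1r.
exists (row i0 C); split=> //; exists (rowsub (maxrankfun D) D); split.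
- by rewrite eq_maxrowsub.
- by move=> j; rewrite row_rowsub row_sub_const_row; eexists; split; last reflexivity.
move=> x [n [p [l [prow _ l1 ->]]]]; rewrite eq_maxrowsub.
have -> : \sum_i l i *: p i - row i0 C = \sum_i l i *: (p i - row i0 C).
  by under [RHS]eq_bigr => i _ do rewrite scalerBr; rewrite sumrB -scaler_suml l1 scale1r.
apply: summx_sub => i _; apply: scalemx_sub; have [j ->] := prow i.
by rewrite -row_sub_const_row row_sub.
Qed.

Lemma rank_sub_const_row :
  C *m (const_mx 1 : 'cV_m) = const_mx 1 -> \rank C = (\rank D).+1.
Proof.
move=> C1; set x0 := row i0 C; set ones : 'cV[R]_m := const_mx 1.
have x0_1 : x0 *m ones = 1.
  by apply/rowP => j; rewrite -row_mul C1 !mxE ord1.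
have D1 : D *m ones = 0.
  by apply/colP => i; rewrite mulmxBl C1 -mulmxA x0_1 mulmx1 !mxE subrr.
have x0_D : ~~ (x0 <= D)%MS.
  apply/negP => /submxP[u x0E]; move: x0_1.
  by rewrite x0E -mulmxA D1 mulmx0 => /eqP; rewrite eq_sym oner_eq0.
have x0_neq0 : x0 != 0 by apply: contraNneq x0_D => ->; exact: sub0mx.
have rank_x0 : \rank x0 = 1%N by rewrite rank_rV x0_neq0.
have rank_cap : \rank (D :&: x0)%MS = 0%N.
  have [le_cap eq_cap] := mxrank_leqif_sup (capmxSr D x0).
  rewrite rank_x0 in le_cap eq_cap.
  apply/eqP; rewrite -leqn0 leqNgt; apply: contra x0_D => cap_gt0.
  have : \rank (D :&: x0)%MS == 1%N by rewrite eqn_leq le_cap cap_gt0.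
  by rewrite eq_cap => /submx_trans; apply; exact: capmxSl.
have x0_C : (x0 <= C)%MS by exact: row_sub.
have DC : (D + x0 :=: C)%MS.
  apply/eqmxP; rewrite addsmx_sub x0_C andbT; apply/andP; split.
    apply/row_subP => i; rewrite row_sub_const_row.
    by rewrite addmx_sub ?row_sub // -scaleN1r scalemx_sub.
  apply/row_subP => i; rewrite -[row i C](subrK x0) -row_sub_const_row.
  by rewrite addmx_sub ?addsmxSr // (submx_trans (row_sub i D)) ?addsmxSl.
by have := mxrank_sum_cap D x0; rewrite rank_cap rank_x0 addn0 addn1 DC.
Qed.

End AffineHull.

Lemma sum_mul_eq (T : finType) (R : ringType) (F : T -> R) a :
  \sum_v F v * (a == v)%:R = F a.
Proof.
rewrite (bigD1 a) //= eqxx mulr1 big1 ?addr0 // => v va.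
by rewrite eq_sym (negPf va) mulr0.
Qed.

Lemma sum_enum_val (T : finType) (R : nmodType) (F : T -> R) :
  \sum_(j < #|T|) F (enum_val j) = \sum_v F v.
Proof. by rewrite -big_enum_val. Qed.

Section CycleSpace.
Variables (V : finType) (m : nat) (st ar : 'I_m -> V) (R : realFieldType).
Variable H : {set 'I_m}.

Local Notation adj := (adjH st ar H).

Definition incidence : 'M[R]_(m, #|V|) :=
  \matrix_(e, j) ((e \in H)%:R * ((ar e == enum_val j)%:R - (st e == enum_val j)%:R)).

Lemma mul_incidence_tr k (z : 'M[R]_(k, #|V|)) i e :
  (z *m incidence^T) i e =
    (e \in H)%:R * (z i (enum_rank (ar e)) - z i (enum_rank (st e))).
Proof.
rewrite mxE (eq_bigr (fun j => (e \in H)%:R *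
   (z i (enum_rank (enum_val j)) * (ar e == enum_val j)%:R
    - z i (enum_rank (enum_val j)) * (st e == enum_val j)%:R))); last first.
  by move=> j _; rewrite !mxE enum_valK mulrCA mulrBr.
rewrite -mulr_sumr sumrB.
by rewrite !(sum_enum_val (fun v => z i (enum_rank v) * (_ == v)%:R)) !sum_mul_eq.
Qed.

Lemma adjH_sym : symmetric adj.
Proof. by move=> u v; apply/existsP/existsP => -[e He]; exists e; rewrite orbC. Qed.

Lemma connect_adjH_sym : connect_sym adj.
Proof. exact/sym_connect_sym/adjH_sym. Qed.

Definition comp_mx : 'M[R]_(#|roots adj|, #|V|) :=
  \matrix_(i, j) (fingraph.root adj (enum_val j) == enum_val i)%:R.

Lemma comp_mx_incidence : comp_mx *m incidence^T = 0.
Proof.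
apply/matrixP => i e; rewrite mul_incidence_tr !mxE !enum_rankK.
case eH: (e \in H); last by rewrite mul0r.
have /connect1 /(fingraph.rootP connect_adjH_sym) -> : adj (st e) (ar e).
  by apply/existsP; exists e; rewrite eH !eqxx.
by rewrite subrr mulr0.
Qed.

Lemma row_free_comp_mx : row_free comp_mx.
Proof.
apply/row_freeP; exists (\matrix_(j, i) (enum_val j == enum_val i :> V)%:R).
apply/matrixP => i i'; rewrite !mxE.
rewrite (eq_bigr (fun j => (fingraph.root adj (enum_val j) == enum_val i)%:R *
    (enum_val i' == enum_val j)%:R)); last first.
  by move=> j _; rewrite !mxE (eq_sym (enum_val j) (enum_val i')).
rewrite (sum_enum_val
  (fun v => (fingraph.root adj v == enum_val i)%:R * (enum_val i' == v)%:R)).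
by rewrite sum_mul_eq (eqP (enum_valP i')) (inj_eq enum_val_inj) eq_sym.
Qed.

(* A potential annihilated by the incidence matrix is constant on each
   connected component, so it is a combination of the component indicators. *)
Lemma kermx_incidence_tr : (kermx incidence^T <= comp_mx)%MS.
Proof.
apply/row_subP => a; set z := row a _.
have zN : z *m incidence^T = 0 by rewrite -row_mul mulmx_ker row0.
clearbody z; pose zf v := z 0 (enum_rank v).
have zf_adj x y : adj x y -> zf x = zf y.
  case/existsP => f /andP[fH edge_f].
  have := mul_incidence_tr z 0 f; rewrite zN mxE fH mul1r => /esym/eqP.
  by rewrite subr_eq0 => /eqP; case/orP: edge_f => /andP[/eqP-> /eqP->].
have zf_connect x y : connect adj x y -> zf x = zf y.
  case/connectP => p; elim: p x => [|w p IH] x /=; first by move=> _ ->.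
  by case/andP => xw wp yE; rewrite (zf_adj _ _ xw) (IH w wp yE).
apply/submxP; exists (\row_i zf (enum_val i)); apply/rowP => j.
rewrite !mxE (eq_bigr (fun i => zf (enum_val i) *
  (fingraph.root adj (enum_val j) == enum_val i)%:R)); last by move=> i _; rewrite !mxE.
rewrite -(big_enum_val (A := roots adj)
  (fun x => zf x * (fingraph.root adj (enum_val j) == x)%:R)).
have root_j : fingraph.root adj (enum_val j) \in roots adj.
  by rewrite inE /roots /= (root_root connect_adjH_sym).
rewrite (bigD1 _ root_j) /= eqxx mulr1 big1 ?addr0; last first.
  by move=> x /andP[_ nx]; rewrite eq_sym (negPf nx) mulr0.
by rewrite -(zf_connect _ _ (connect_root _ _)) /zf enum_valK.
Qed.

Lemma rank_incidence : (\rank incidence + ncomp st ar H)%N = #|V|.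
Proof.
have -> : ncomp st ar H = #|roots adj|.
  by apply: eq_card => x; rewrite !inE andbT.
have comp_ker : (comp_mx <= kermx incidence^T)%MS by rewrite sub_kermx comp_mx_incidence.
have rank_ker : \rank (kermx incidence^T) = #|roots adj|.
  rewrite -(eqP row_free_comp_mx); apply/eqP.
  by rewrite eqn_leq (mxrankS kermx_incidence_tr) (mxrankS comp_ker).
by rewrite -rank_ker mxrank_ker mxrank_tr subnKC // rank_leq_col.
Qed.

Lemma circulation_incidence (y : 'rV[R]_m) : (forall e, e \notin H -> y 0 e = 0) ->
  circulation st ar y <-> y *m incidence = 0.
Proof.
move=> y_out.
have yN j : (y *m incidence) 0 j = \sum_(e | ar e == enum_val j) y 0 e
                                  - \sum_(e | st e == enum_val j) y 0 e.
  rewrite mxE !(big_mkcond (fun e => ar e == _)) !(big_mkcond (fun e => st e == _)) /=.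
  rewrite -sumrB; apply: eq_bigr => e _; rewrite mxE.
  case: (boolP (e \in H)) => eH; last by rewrite y_out // !mul0r !if_same subrr.
  by rewrite mul1r mulrBr; case: (ar e == _); case: (st e == _); rewrite ?mulr1 ?mulr0 ?subr0.
split=> [y_circ | y_ker v]; first by apply/rowP => j; rewrite yN y_circ subrr mxE.
by apply/eqP; rewrite -subr_eq0; have := yN (enum_rank v); rewrite y_ker mxE enum_rankK => <-.
Qed.

Definition supp_mx : 'M[R]_(#|H|, m) := \matrix_(i, e) (e == enum_val i)%:R.

Lemma supp_mxP (y : 'rV[R]_m) : (y <= supp_mx)%MS <-> forall e, e \notin H -> y 0 e = 0.
Proof.
split=> [/submxP[u ->] e eH | y_out].
  rewrite mxE big1 // => i _; rewrite mxE.
  by case: eqP => [ei|]; [have := enum_valP i; rewrite -ei (negPf eH) | rewrite mulr0].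
apply/submxP; exists (\row_i y 0 (enum_val i)); apply/rowP => e.
rewrite !mxE (eq_bigr (fun i => y 0 (enum_val i) * (e == enum_val i)%:R)); last first.
  by move=> i _; rewrite !mxE.
rewrite -(big_enum_val (fun x => y 0 x * (e == x)%:R)).
case: (boolP (e \in H)) => eH.
  rewrite (bigD1 e eH) /= eqxx mulr1 big1 ?addr0 // => x /andP[_ xe].
  by rewrite eq_sym (negPf xe) mulr0.
rewrite y_out // big1 // => x xH; case: eqP => [ex|]; last by rewrite mulr0.
by rewrite ex xH in eH.
Qed.

Lemma rank_supp_mx : \rank supp_mx = #|H|.
Proof.
apply/eqP/row_freeP; exists supp_mx^T; apply/matrixP => i i'.
rewrite !mxE (eq_bigr (fun e => (enum_val i' == e)%:R * (enum_val i == e)%:R)); last first.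
  by move=> e _; rewrite !mxE mulrC !(eq_sym e).
by rewrite sum_mul_eq (inj_eq enum_val_inj) eq_sym.
Qed.

Definition cycle_space := (supp_mx :&: kermx incidence)%MS.

Lemma cycle_spaceP (y : 'rV[R]_m) :
  (y <= cycle_space)%MS <-> circulation st ar y /\ forall e, e \notin H -> y 0 e = 0.
Proof.
rewrite sub_capmx; split=> [/andP[/supp_mxP y_out y_ker] | [y_circ y_out]].
  by split=> //; apply/circulation_incidence => //; apply/eqP; rewrite -sub_kermx.
by rewrite sub_kermx; apply/andP; split; [apply/supp_mxP | apply/eqP/circulation_incidence].
Qed.

Lemma rank_cycle_space : (\rank cycle_space + \rank incidence)%N = #|H|.
Proof.
have full_sum : (1%:M <= supp_mx + kermx incidence)%MS.
  apply/row_subP => e; rewrite row1; case: (boolP (e \in H)) => eH.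
    apply: submx_trans (addsmxSl _ _); apply/supp_mxP => f fH; rewrite mxE eqxx /=.
    by case: eqP => [fe|//]; rewrite fe eH in fH.
  apply: submx_trans (addsmxSr _ _); rewrite sub_kermx -rowE.
  by apply/eqP/rowP => j; rewrite !mxE (negPf eH) mul0r.
have rank_sum : \rank (supp_mx + kermx incidence)%MS = m.
  by apply/eqP; rewrite eqn_leq rank_leq_col -{1}(mxrank1 R m) mxrankS.
have := mxrank_sum_cap supp_mx (kermx incidence).
rewrite rank_sum rank_supp_mx mxrank_ker -/cycle_space.
have := rank_leq_row incidence; lia.
Qed.

End CycleSpace.

Section CycleMatrix.
Variables (V : finType) (m : nat) (st ar : 'I_m -> V) (R : realFieldType).
Variable H : {set 'I_m}.

Local Notation simple := (is_simple_cycle_in st ar).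
Local Notation L := (simple_cycles st ar H).

Definition cycle_mx : 'M[R]_(size L, m) := \matrix_(i, e) cycvec R (nth [::] L i) 0 e.

Lemma row_cycle_mx i : row i cycle_mx = cycvec R (nth [::] L i).
Proof. by apply/rowP => e; rewrite !mxE. Qed.

Lemma simple_nth_cycles (i : 'I_(size L)) : simple H (nth [::] L i).
Proof. by rewrite -mem_simple_cycles mem_nth. Qed.

Lemma index_simple_cycles s : simple H s -> exists i : 'I_(size L), nth [::] L i = s.
Proof.
rewrite -mem_simple_cycles -index_mem => sL.
by exists (Ordinal sL); rewrite nth_index // -index_mem.
Qed.

Lemma rows_cycle_mx x :
  (exists i, x = row i cycle_mx) <-> exists s, simple H s /\ x = cycvec R s.
Proof.
split=> [[i ->] | [s [/index_simple_cycles[i <-] ->]]]; last by exists i; rewrite row_cycle_mx.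
by exists (nth [::] L i); rewrite row_cycle_mx simple_nth_cycles.
Qed.

Lemma conv_rows_cycle_mx x :
  conv (fun y => exists i, y = row i cycle_mx) x <-> Pface st ar R H x.
Proof.
rewrite -Ppoly_Pface; split; apply: eq_conv => y; first exact: rows_cycle_mx.
exact: iff_sym (rows_cycle_mx y).
Qed.

Lemma cycle_mx_sum1 : cycle_mx *m (const_mx 1 : 'cV_m) = const_mx 1.
Proof.
apply/colP => i; rewrite !mxE -[RHS](sum_cycvec R (s := nth [::] L i)).
  by apply: eq_bigr => e _; rewrite !mxE mulr1.
by have /and4P[] := simple_nth_cycles i.
Qed.

Lemma cycle_mx_cycle_space : full st ar H -> (cycle_mx :=: cycle_space st ar R H)%MS.
Proof.
move=> fullH; apply/eqmxP/andP; split; apply/row_subP => i.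
  have /and4P[_ /andP[/allP sH cs] _ _] := simple_nth_cycles i.
  rewrite row_cycle_mx; apply/cycle_spaceP; split; first exact: circulation_cycvec.
  by move=> e eH; apply: cycvec_eq0; apply: contra eH; apply: sH.
have /cycle_spaceP[y_circ y_out] := row_sub i (cycle_space st ar R H).
apply: circulation_sub_cycle_span fullH _ _ y_circ y_out => s /index_simple_cycles[j <-].
have /and4P[s_ne0 _ _ _] := simple_nth_cycles j.
by rewrite edge_count_cycvec // -row_cycle_mx scalemx_sub ?row_sub.
Qed.

End CycleMatrix.

Lemma affdim_Pface (V : finType) (m : nat) (st ar : 'I_m -> V) (R : realFieldType) H :
  full st ar H -> H != set0 -> exists d : nat, affdim (Pface st ar R H) d /\
    d%:Z = #|H|%:Z - #|V|%:Z + (ncomp st ar H)%:Z - 1.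
Proof.
move=> fullH /set0Pn[e0 /(full_simple_cycle fullH)[s0 /index_simple_cycles[i0 _] _]].
set C := cycle_mx st ar R H.
exists (\rank (C - (const_mx 1 : 'cV[R]_(size (simple_cycles st ar H))) *m row i0 C)).
split; first exact: eq_affdim (@conv_rows_cycle_mx _ _ st ar R H) (affdim_conv_rows C i0).
have := rank_sub_const_row i0 (cycle_mx_sum1 st ar R H).
have := rank_cycle_space st ar R H; have := rank_incidence st ar R H.
by rewrite /C -(cycle_mx_cycle_space R fullH); lia.
Qed.

Theorem mainTheorem6 (V : finType) (m : nat) (st ar : 'I_m -> V)
    (R : realFieldType) :
  (forall H : {set 'I_m}, full st ar H -> H != set0 ->
     is_face (Ppoly st ar R [set: 'I_m]) (Pface st ar R H)) /\
  (forall F : 'rV[R]_m -> Prop, is_face (Ppoly st ar R [set: 'I_m]) F ->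
     exists H : {set 'I_m}, [/\ full st ar H, H != set0 &
        forall x, F x <-> Pface st ar R H x]) /\
  (forall H1 H2 : {set 'I_m}, full st ar H1 -> H1 != set0 ->
     full st ar H2 -> H2 != set0 ->
     (H1 \subset H2 <-> (forall x, Pface st ar R H1 x -> Pface st ar R H2 x))) /\
  (forall H : {set 'I_m}, full st ar H -> H != set0 ->
     forall x, Ppoly st ar R H x <-> Pface st ar R H x) /\
  (forall H : {set 'I_m}, full st ar H -> H != set0 ->
     exists d : nat, affdim (Pface st ar R H) d /\
       (d%:Z = #|H|%:Z - #|V|%:Z + (ncomp st ar H)%:Z - 1)%R).
Proof.
split; first exact: Pface_face.
split; first exact: face_Pface.
split; first by move=> H1 H2 fullH1 _ _ _; exact: Pface_subset.
split; first by move=> H _ _ x; exact: Ppoly_Pface.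
exact: affdim_Pface.
Qed.
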